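(* There exist ternary Euclidean LCD codes with parameters $[20,7,9]$ and $[20,12,6]$.
   Context: A ternary $[n,k,d]$ code is a $k$-dimensional subspace $C\subseteq\mathbb{F}_3^n$ with minimum nonzero Hamming weight $d$; it is Euclidean LCD if $C\cap C^{\perp_E}=\{0\}$, where $C^{\perp_E}$ is the dual with respect to $\langle x,y\rangle_E=\sum x_iy_i$. *)

(* Ternary linear codes as subspaces of 'rV['F_3]_n,
   represented (mxalgebra style) by a square matrix whose row space is C. *)
From mathcomp Require Import all_boot all_algebra.
Set Implicit Arguments. Unset Strict Implicit. Unset Printing Implicit Defensive.
Import GRing.Theory.
Local Open Scope ring_scope.

Notation F3 := ('F_3 : finFieldType).

Definition in_code n (C : 'M[F3]_n) (x : 'rV[F3]_n) : Prop := (x <= C)%MS.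

Definition hwt n (x : 'rV[F3]_n) : nat := #|[set i : 'I_n | x 0 i != 0]|.

Definition eip n (x y : 'rV[F3]_n) : F3 := \sum_(i < n) x 0 i * y 0 i.

Definition in_eucl_dual n (C : 'M[F3]_n) (x : 'rV[F3]_n) : Prop :=
  forall y, in_code C y -> eip x y = 0.

Definition is_code_nkd n k d (C : 'M[F3]_n) : Prop :=
  \rank C = k /\
  (exists2 x, in_code C x & x != 0 /\ hwt x = d) /\
  (forall x, in_code C x -> x != 0 -> (d <= hwt x)%N).

Definition eucl_LCD n (C : 'M[F3]_n) : Prop :=
  forall x, in_code C x -> in_eucl_dual C x -> x = 0.

(* A vector of
   <<G>> orthogonal to all of <<G>> is orthogonal to every row of G, so <<G>> is LCD as
   soon as every nonzero combination u *m G has a nonzero inner product with some row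
   of G; and if every such combination also has weight at least d > 0, the rows of G
   are independent and d bounds the minimum distance, attained by a row of weight d.
   Weight and orthogonality are invariant under nonzero scalars, so it is enough to
   check one codeword on each line of the code, i.e. (3^k - 1)/2 combinations; this
   is done by evaluation on lists of digits in {0, 1, 2} read in F_3 through [_%:R]. *)

From mathcomp Require Import all_boot all_algebra.
Set Implicit Arguments. Unset Strict Implicit. Unset Printing Implicit Defensive.
Import GRing.Theory.
Local Open Scope ring_scope.

(* Unlike [modn], this evaluates fast under [vm_compute]. *)
Fixpoint mod3 m := if m is m'.+3 then mod3 m' else m.

Lemma mod3E m : mod3 m = (m %% 3)%N.
Proof.
elim: m {-2}m (leqnn m) => [|m IH] [|[|[|k]]] //= le_km.
by rewrite -[k.+3]addn3 modnDr (IH k (ltnW (ltnW le_km))).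
Qed.

Lemma natr_mod3 m : (mod3 m)%:R = m%:R :> F3.
Proof. by rewrite mod3E; apply: Fp_nat_mod. Qed.

Lemma natrF3_eq0 m : ((m%:R : F3) == 0) = (mod3 m == 0)%N.
Proof. by rewrite -(inj_eq val_inj) /= (val_Fp_nat (isT : prime 3)) mod3E. Qed.

Lemma sqrF3_eq1 (c : F3) : c != 0 -> c * c = 1.
Proof. by case: c => -[|[|[|m]]] lt_m3 //= _; apply/val_inj. Qed.

Lemma hwt0 n : hwt (0 : 'rV[F3]_n) = 0%N.
Proof. by apply/eqP; rewrite cards_eq0; apply/eqP/setP => j; rewrite !inE mxE eqxx. Qed.

Lemma hwtZ n c (x : 'rV[F3]_n) : c != 0 -> hwt (c *: x) = hwt x.
Proof.
move=> c_neq0; apply: eq_card => j.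
by rewrite !inE mxE mulf_eq0 (negbTE c_neq0).
Qed.

Lemma eipZl n c (x y : 'rV[F3]_n) : eip (c *: x) y = c * eip x y.
Proof. by rewrite /eip mulr_sumr; apply: eq_bigr => j _; rewrite mxE mulrA. Qed.

Section GeneratorMatrix.
Variables (k n : nat) (G : 'M[F3]_(k, n)).

Lemma in_code_genmxP x : in_code <<G>>%MS x <-> exists u, x = u *m G.
Proof.
rewrite /in_code genmxE; split => [/submxP [u ->]|[u ->]]; last exact: submxMl.
by exists u.
Qed.

Lemma row_in_code_genmx i : in_code <<G>>%MS (row i G).
Proof. by apply/in_code_genmxP; exists (delta_mx 0 i); rewrite rowE. Qed.

Lemma eucl_LCD_genmx :
  (forall u, u != 0 -> exists i, eip (u *m G) (row i G) != 0) -> eucl_LCD <<G>>%MS.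
Proof.
move=> not_orth x /in_code_genmxP [u ->] x_dual.
have [-> | /not_orth [i]] := eqVneq u 0; first by rewrite mul0mx.
by rewrite x_dual ?eqxx //; apply: row_in_code_genmx.
Qed.

Lemma is_code_nkd_genmx d : (0 < d)%N ->
  (forall u, u != 0 -> (d <= hwt (u *m G))%N) -> (exists i, hwt (row i G) = d) ->
  is_code_nkd k d <<G>>%MS.
Proof.
move=> d_gt0 wt_ge [i wt_i].
have nz_hwt x : hwt x = d -> x != 0.
  by move=> wt_x; apply: contraTneq d_gt0 => x0; rewrite -wt_x x0 hwt0.
split; [|split].
- rewrite genmxE; apply/eqP/inj_row_free => u uG0.
  by apply: contraTeq d_gt0 => /wt_ge; rewrite uG0 hwt0 leqn0 => /eqP ->.
- by exists (row i G); [apply: row_in_code_genmx | split => //; apply: nz_hwt].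
- move=> x /in_code_genmxP [u ->] uG_neq0; apply: wt_ge.
  by apply: contraNneq uG_neq0 => ->; rewrite mul0mx.
Qed.

End GeneratorMatrix.

Fixpoint dadd (s t : seq nat) : seq nat :=
  match s, t with
  | a :: s', b :: t' => mod3 (a + b) :: dadd s' t'
  | [::], _ => t
  | _, [::] => s
  end.

Definition dscale (a : nat) (s : seq nat) : seq nat := [seq mod3 (a * b) | b <- s].

Fixpoint ddot (s t : seq nat) : nat :=
  if s is a :: s' then (if t is b :: t' then a * b + ddot s' t' else 0)%N else 0%N.

Definition dwt (s : seq nat) : nat := count (fun a => mod3 a != 0)%N s.

Lemma size_dadd s t : size (dadd s t) = maxn (size s) (size t).
Proof. by elim: s t => [|a s IH] [|b t] //=; rewrite ?maxn0 // IH maxnSS. Qed.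

Lemma size_dscale a s : size (dscale a s) = size s.
Proof. exact: size_map. Qed.

Lemma natr_nth_dadd s t j :
  (nth 0 (dadd s t) j)%:R = (nth 0 s j)%:R + (nth 0 t j)%:R :> F3.
Proof.
elim: s t j => [|a s IH] [|b t] [|j] //=; rewrite ?nth_nil ?add0r ?addr0 //.
by rewrite natr_mod3 natrD.
Qed.

Lemma natr_nth_dscale a s j :
  (nth 0 (dscale a s) j)%:R = a%:R * (nth 0 s j)%:R :> F3.
Proof.
have [lt_js | le_sj] := ltnP j (size s); last by rewrite !nth_default ?size_map ?mulr0.
by rewrite (nth_map 0) // natr_mod3 natrM.
Qed.

Lemma ddot_sum s t m : (size s <= m)%N ->
  ddot s t = (\sum_(j < m) nth 0 s j * nth 0 t j)%N.
Proof.
elim: s t m => [|a s IH] t m; first by rewrite big1 // => j _; rewrite nth_nil.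
case: m => [|m] //= le_sm; rewrite big_ord_recl.
case: t => [|b t] /=; last by rewrite (IH t m).
by rewrite muln0 big1 // => j _; rewrite ?nth_nil muln0.
Qed.

Lemma count_nth_sum (T : Type) (x0 : T) (p : pred T) s m : ~~ p x0 -> (size s <= m)%N ->
  count p s = (\sum_(j < m) p (nth x0 s j))%N.
Proof.
move=> /negbTE p_x0; elim: s m => [|a s IH] m.
  by rewrite big1 // => j _; rewrite nth_nil p_x0.
by case: m => [|m] //= le_sm; rewrite big_ord_recl (IH m).
Qed.

Section DigitVectors.
Variable n : nat.

Definition digits_rV (s : seq nat) : 'rV[F3]_n := \row_j (nth 0 s j)%:R.

Lemma digits_rV_add s t : digits_rV (dadd s t) = digits_rV s + digits_rV t.
Proof. by apply/rowP => j; rewrite !mxE natr_nth_dadd. Qed.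

Lemma digits_rV_scale a s : digits_rV (dscale a s) = a%:R *: digits_rV s.
Proof. by apply/rowP => j; rewrite !mxE natr_nth_dscale. Qed.

Lemma hwt_digits_rV s : (size s <= n)%N -> hwt (digits_rV s) = dwt s.
Proof.
move=> le_sn; rewrite /hwt /dwt (count_nth_sum (x0 := 0%N) _ le_sn) //.
rewrite -sum1dep_card big_mkcond /=.
by apply: eq_bigr => j _; rewrite mxE natrF3_eq0; case: (mod3 _ == 0)%N.
Qed.

Lemma eip_digits_rV s t : (size s <= n)%N -> eip (digits_rV s) (digits_rV t) = (ddot s t)%:R.
Proof.
move=> le_sn; rewrite (ddot_sum t le_sn) natr_sum.
by apply: eq_bigr => j _; rewrite !mxE natrM.
Qed.

Definition digits_mx (Gs : seq (seq nat)) : 'M[F3]_(size Gs, n) :=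
  \matrix_(i, j) (nth 0 (nth [::] Gs i) j)%:R.

Lemma mul_digits_mx_cons g Gs (u : 'rV[F3]_(size Gs).+1) :
  u *m digits_mx (g :: Gs) =
  u 0 0 *: digits_rV g + (\row_i u 0 (lift 0 i)) *m digits_mx Gs.
Proof.
have row0 : row 0 (digits_mx (g :: Gs)) = digits_rV g by apply/rowP => j; rewrite !mxE.
rewrite mulmx_sum_row big_ord_recl row0 mulmx_sum_row; congr (_ + _).
by apply: eq_bigr => i _; rewrite mxE; congr (_ *: _); apply/rowP => j; rewrite !mxE.
Qed.

Fixpoint all_lc (P : pred (seq nat)) (acc : seq nat) (Gs : seq (seq nat)) : bool :=
  if Gs is g :: Gs' then all (fun a => all_lc P (dadd acc (dscale a g)) Gs') (iota 0 3)
  else P acc.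

(* Nonzero combinations whose first nonzero coefficient is 1: one per line. *)
Fixpoint all_line_lc (P : pred (seq nat)) (Gs : seq (seq nat)) : bool :=
  if Gs is g :: Gs' then all_line_lc P Gs' && all_lc P g Gs' else true.

Lemma all_lcP P acc Gs : (size acc <= n)%N -> all (fun g => size g <= n)%N Gs ->
  all_lc P acc Gs -> forall u : 'rV_(size Gs),
  exists x, [/\ P x, (size x <= n)%N & digits_rV x = digits_rV acc + u *m digits_mx Gs].
Proof.
elim: Gs acc => [|g Gs IH] acc le_acc_n.
  by move=> _ P_acc u; exists acc; rewrite thinmx0 mul0mx addr0.
move=> /andP [le_g_n le_Gs_n] /allP all_a u.
pose a := val (u 0 0).
have a_digit : a \in iota 0 3 by rewrite mem_iota (ltn_ord (u 0 0)).
have le_acc'_n : (size (dadd acc (dscale a g)) <= n)%N.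
  by rewrite size_dadd size_dscale geq_max le_acc_n.
have [x [Px le_x_n x_val]] := IH _ le_acc'_n le_Gs_n (all_a a a_digit) (\row_i u 0 (lift 0 i)).
exists x; split => //; rewrite x_val mul_digits_mx_cons digits_rV_add digits_rV_scale.
by rewrite natr_Zp addrA.
Qed.

Lemma all_line_lcP P Gs : all (fun g => size g <= n)%N Gs -> all_line_lc P Gs ->
  forall u : 'rV_(size Gs), u != 0 -> exists x, [/\ P x, (size x <= n)%N &
    exists2 c, c != 0 & digits_rV x = c *: (u *m digits_mx Gs)].
Proof.
elim: Gs => [|g Gs IH]; first by move=> _ _ u; rewrite thinmx0 eqxx.
move=> /andP [le_g_n le_Gs_n] /andP [lines_Gs all_g] u u_neq0.
pose u' := \row_i u 0 (lift 0 i) : 'rV_(size Gs).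
have [u00 | u00_neq0] := eqVneq (u 0 0) 0.
  have u'_neq0 : u' != 0.
    apply: contraNneq u_neq0 => u'0; apply/eqP/rowP => j; rewrite mxE.
    case: (unliftP 0 j) => [j' ->|->] //.
    by have := congr1 (fun v : 'rV_(size Gs) => v 0 j') u'0; rewrite !mxE.
  have [x [Px le_x_n x_val]] := IH le_Gs_n lines_Gs u' u'_neq0.
  by exists x; rewrite mul_digits_mx_cons u00 scale0r add0r.
have [x [Px le_x_n x_val]] := all_lcP le_g_n le_Gs_n all_g (u 0 0 *: u').
exists x; split => //; exists (u 0 0) => //.
by rewrite x_val mul_digits_mx_cons scalerDr scalerA sqrF3_eq1 // scale1r scalemxAl.
Qed.

End DigitVectors.

Definition heavy_not_dual d Gs x :=
  (d <= dwt x)%N && has (fun g => mod3 (ddot x g) != 0)%N Gs.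

Lemma lcd_code_of_digits n d Gs : (0 < d)%N -> all (fun g => size g <= n)%N Gs ->
  has (fun g => dwt g == d) Gs -> all_line_lc (heavy_not_dual d Gs) Gs ->
  is_code_nkd (size Gs) d <<digits_mx n Gs>>%MS /\ eucl_LCD <<digits_mx n Gs>>%MS.
Proof.
move=> d_gt0 le_Gs_n wt_d all_ok.
have row_digits i : row i (digits_mx n Gs) = digits_rV n (nth [::] Gs i).
  by apply/rowP => j; rewrite !mxE.
split.
- apply: is_code_nkd_genmx => // [u /(all_line_lcP le_Gs_n all_ok) [x [/andP [wt_x _] le_x_n]] |].
    by case=> c c_neq0 x_val; rewrite -(hwtZ _ c_neq0) -x_val hwt_digits_rV.
  have /(has_nthP [::]) [i lt_i /eqP wt_i] := wt_d.
  exists (Ordinal lt_i); rewrite row_digits hwt_digits_rV //.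
  exact: (allP le_Gs_n) (mem_nth _ _).
- apply: eucl_LCD_genmx => u /(all_line_lcP le_Gs_n all_ok) [x [/andP [_]]].
  case/(has_nthP [::]) => i lt_i not_dual le_x_n [c _ x_val].
  exists (Ordinal lt_i); apply: contraNneq not_dual; rewrite row_digits => uG_orth.
  by rewrite -natrF3_eq0 -(eip_digits_rV _ le_x_n) x_val eipZl uG_orth mulr0.
Qed.

Definition G20_7 : seq (seq nat) :=
  [:: [:: 1; 0; 0; 0; 0; 0; 0; 2; 2; 0; 1; 0; 1; 1; 1; 2; 1; 1; 1; 1];
      [:: 0; 1; 0; 0; 0; 0; 0; 0; 1; 1; 1; 0; 2; 1; 1; 2; 0; 2; 0; 1];
      [:: 0; 0; 1; 0; 0; 0; 0; 0; 2; 0; 2; 2; 0; 2; 2; 0; 1; 2; 0; 1];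
      [:: 0; 0; 0; 1; 0; 0; 0; 1; 1; 1; 2; 1; 1; 0; 1; 0; 1; 1; 0; 1];
      [:: 0; 0; 0; 0; 1; 0; 0; 2; 2; 0; 0; 2; 2; 1; 0; 1; 2; 2; 2; 0];
      [:: 0; 0; 0; 0; 0; 1; 0; 1; 0; 2; 0; 0; 2; 2; 0; 2; 2; 2; 1; 1];
      [:: 0; 0; 0; 0; 0; 0; 1; 2; 1; 0; 1; 2; 0; 1; 2; 1; 1; 2; 1; 2]].

Definition G20_12 : seq (seq nat) :=
  [:: [:: 2; 2; 0; 2; 2; 1; 2; 0; 1; 0; 0; 0; 0; 0; 0; 0; 0; 0; 0; 0];
      [:: 1; 0; 1; 1; 0; 2; 1; 2; 0; 1; 0; 0; 0; 0; 0; 0; 0; 0; 0; 0];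
      [:: 0; 0; 1; 2; 2; 0; 1; 2; 0; 0; 1; 0; 0; 0; 0; 0; 0; 0; 0; 0];
      [:: 1; 0; 0; 0; 1; 2; 2; 2; 0; 0; 0; 1; 0; 0; 0; 0; 0; 0; 0; 0];
      [:: 0; 0; 1; 1; 1; 1; 1; 0; 0; 0; 0; 0; 1; 0; 0; 0; 0; 0; 0; 0];
      [:: 1; 2; 2; 0; 1; 0; 2; 0; 0; 0; 0; 0; 0; 1; 0; 0; 0; 0; 0; 0];
      [:: 0; 2; 2; 0; 2; 0; 1; 1; 0; 0; 0; 0; 0; 0; 1; 0; 0; 0; 0; 0];
      [:: 2; 0; 2; 0; 1; 2; 1; 0; 0; 0; 0; 0; 0; 0; 0; 1; 0; 0; 0; 0];
      [:: 1; 1; 2; 1; 1; 1; 2; 2; 0; 0; 0; 0; 0; 0; 0; 0; 1; 0; 0; 0];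
      [:: 2; 1; 0; 1; 2; 2; 2; 1; 0; 0; 0; 0; 0; 0; 0; 0; 0; 1; 0; 0];
      [:: 1; 2; 2; 1; 0; 1; 1; 0; 0; 0; 0; 0; 0; 0; 0; 0; 0; 0; 1; 0];
      [:: 2; 1; 0; 0; 0; 1; 2; 2; 0; 0; 0; 0; 0; 0; 0; 0; 0; 0; 0; 1]].

Theorem proposition5p5 :
  (exists C : 'M[F3]_20, is_code_nkd 7%N 9%N C /\ eucl_LCD C) /\
  (exists C : 'M[F3]_20, is_code_nkd 12%N 6%N C /\ eucl_LCD C).
Proof.
split; [exists <<digits_mx 20 G20_7>>%MS | exists <<digits_mx 20 G20_12>>%MS].
  by apply: lcd_code_of_digits; vm_compute.
by apply: lcd_code_of_digits; vm_compute.
Qed.
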